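(* Let $\Delta\ge 3$ and $n\ge 3$. For every execution of the traversal procedure on $T_{n,\Delta}$, the number of edges of the output graph $G$ satisfies $$|E(G)| < \Bigl(2-\frac{1}{\Delta-1}\Bigr)n+\frac{\Delta-3}{2}.$$
   Context: Fix integers $\Delta\ge 3$ and $n\ge 3$, and put $b=\Delta-1$. The complete $\Delta$-ary tree $T_{n,\Delta}$ is the rooted tree on vertex set $\{1,\dots,n\}$ with root $1$ in which the children of a vertex $i$ are the integers $j$ with $b(i-1)+2\le j\le bi+1$ and $j\le n$ (equivalently, the parent of $j\ge 2$ is $\lfloor (j-2)/b\rfloor+1$). Thus every vertex has at most $\Delta-1$ children, all levels except possibly the last are full, and the last level is filled from the left. A leaf is a vertex other than the root having no children. Traversal procedure: start with edge set $E$ equal to the edge set of $T_{n,\Delta}$, all vertices unmarked, and $v_1=1$. For $k=1,\dots,n-1$: mark $v_k$; then (a) if $v_k\neq 1$ and the parent of $v_k$ is unmarked, let $v_{k+1}$ be the parent of $v_k$; (b) otherwise, if $v_k$ has an unmarked child, let $v_{k+1}$ be any unmarked child of $v_k$; (c) otherwise, let $v_{k+1}$ be any unmarked leaf $u$ and add the edge $\{v_k,u\}$ to $E$ (a ''jump edge''). Finally mark $v_n$ and add the edge $\{v_n,1\}$ to $E$ (if not already present). The output is the simple graph $G=(\{1,\dots,n\},E)$. An execution is any run of this procedure, i.e. any admissible sequence of choices in (b) and (c). *)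

From HB Require Import structures.
From mathcomp Require Import all_boot all_order all_algebra.
Set Implicit Arguments. Unset Strict Implicit. Unset Printing Implicit Defensive.

(* Complete Delta-ary tree T_{n,Delta} on vertices 1..n, root 1, b = Delta - 1. *)

Definition tparent (b j : nat) : nat := (j - 2) %/ b + 1.

Definition is_child (b n i j : nat) : bool :=
  [&& b * (i - 1) + 2 <= j, j <= b * i + 1 & j <= n].

Definition is_leaf (b n u : nat) : bool :=
  [&& 1 <= u <= n, u != 1 & ~~ has (is_child b n u) (iota 1 n)].

(* x has an unmarked child (m = list of marked vertices) *)
Definition has_unmarked_child (b n : nat) (m : seq nat) (x : nat) : bool :=
  has (fun j => is_child b n x j && (j \notin m)) (iota 1 n).

Definition case_a (b : nat) (m : seq nat) (x : nat) : bool :=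
  (x != 1) && (tparent b x \notin m).

(* case (c) applies (a jump edge is added) *)
Definition case_c (b n : nat) (m : seq nat) (x : nat) : bool :=
  ~~ case_a b m x && ~~ has_unmarked_child b n m x.

Definition step_ok (b n : nat) (m : seq nat) (x y : nat) : bool :=
  if case_a b m x then y == tparent b x
  else if has_unmarked_child b n m x then is_child b n x y && (y \notin m)
  else is_leaf b n y && (y \notin m).

(* s = [v_1; ...; v_n] is an execution of the traversal procedure;
   at step k (1-based) the marked vertices are v_1..v_k. *)
Definition execution (Delta n : nat) (s : seq nat) : bool :=
  let b := Delta.-1 in
  [&& size s == n, nth 0 s 0 == 1 &
      all (fun k => step_ok b n (take k.+1 s) (nth 0 s k) (nth 0 s k.+1))
          (iota 0 n.-1)].

Definition uedge (x y : nat) : nat * nat := (minn x y, maxn x y).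

(* raw list of edges of the output graph (possibly with repetitions) *)
Definition output_edges_raw (Delta n : nat) (s : seq nat) : seq (nat * nat) :=
  let b := Delta.-1 in
  [seq uedge (tparent b j) j | j <- iota 2 n.-1]
  ++ [seq uedge (nth 0 s k) (nth 0 s k.+1)
       | k <- iota 0 n.-1 & case_c b n (take k.+1 s) (nth 0 s k)]
  ++ [:: uedge (nth 0 s n.-1) 1].

Definition output_edges (Delta n : nat) (s : seq nat) : seq (nat * nat) :=
  undup [seq e <- output_edges_raw Delta n s | e.1 != e.2].

Definition num_edges (Delta n : nat) (s : seq nat) : nat :=
  size (output_edges Delta n s).

From HB Require Import structures.
From mathcomp Require Import all_boot all_order all_algebra.
Import Order.TTheory GRing.Theory Num.Theory.
From mathcomp Require Import zify lra.
Set Implicit Arguments. Unset Strict Implicit.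

(* The output graph consists of the n - 1 tree edges, one edge per jump and
   the closing edge, so |E(G)| <= n + #jumps.  In T_{n,Delta} the vertices
   1..p with p = (n - 2) %/ b + 1 are exactly the non-leaves, so there are
   n - p leaves, and n - 1 <= b * p.  Every jump lands on a fresh, hence
   distinct, leaf.  Moreover, until the first jump the walk only descends
   from the root along child edges (case (a) never applies, since the parent
   was the previous vertex), so the vertex at which the first jump happens
   is a leaf that is visited before every jump target.  Hence
   #jumps + 1 <= n - p, and |E(G)| <= 2n - 1 - p <= (2 - 1/b) n - 1 + 1/b,
   which is below the claimed bound since b >= 2. *)

(* The largest non-leaf vertex (= the number of non-leaves) of T_{n,b+1}. *)
Definition internal (b n : nat) : nat := (n - 2) %/ b + 1.

Definition jumps (b n : nat) (s : seq nat) : seq nat :=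
  [seq k <- iota 0 n.-1 | case_c b n (take k.+1 s) (nth 0 s k)].

Section Tree.
Variables (b n : nat).
Hypothesis b_gt0 : 0 < b.

Lemma child_gt x y : is_child b n x y -> (x < y) && (2 <= y <= n).
Proof.
move=> /and3P[y_ge y_le y_le_n].
have := leq_pmull (x - 1) b_gt0; lia.
Qed.

Lemma child_parent x y : is_child b n x y -> tparent b y = x.
Proof.
move=> /and3P[y_ge y_le _]; rewrite /tparent.
have x_ge1 : 1 <= x by case: x y_ge y_le => //=; rewrite muln0 /=; lia.
have bx : b * x = b * (x - 1) + b by rewrite -{1}(subnK x_ge1) mulnDr muln1.
have -> : y - 2 = (x - 1) * b + (y - 2 - (x - 1) * b) by rewrite mulnC; lia.
rewrite divnMDl // divn_small; lia.
Qed.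

(* Every leaf lies above the internal vertices: a vertex u <= internal b n
   has its first child b (u - 1) + 2 within range. *)
Lemma leaf_gt_internal u : 2 <= n -> is_leaf b n u -> internal b n < u <= n.
Proof.
move=> n_ge2 /and3P[/andP[u_ge1 u_le] _ no_child]; rewrite u_le andbT.
rewrite ltnNge; apply/negP => u_int.
have first_child : is_child b n u (b * (u - 1) + 2).
  have hd : b * ((n - 2) %/ b) <= n - 2 by rewrite mulnC leq_divM.
  have hu : b * (u - 1) <= b * ((n - 2) %/ b).
    by rewrite leq_mul2l; apply/orP; right; rewrite /internal in u_int; lia.
  apply/and3P; split; lia.
have child_in : b * (u - 1) + 2 \in iota 1 n.
  by rewrite mem_iota; have := child_gt first_child; lia.
by have := hasPn no_child _ child_in; rewrite first_child.
Qed.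

Lemma internal_lt : 2 <= n -> internal b n < n.
Proof. by move=> n_ge2; have := leq_div (n - 2) b; rewrite /internal; lia. Qed.

Lemma internal_covers : 2 <= n -> n - 1 <= b * internal b n.
Proof. by move=> n_ge2; have := ltn_ceil (n - 2) b_gt0; rewrite mulnC /internal addn1; lia. Qed.

End Tree.

Lemma step_fresh b n m x y : step_ok b n m x y -> y \notin m.
Proof.
rewrite /step_ok /case_a; case: ifP => [/andP[_ h] /eqP -> //|_].
by case: ifP => _ /andP[].
Qed.

Lemma step_jump_leaf b n m x y : case_c b n m x -> step_ok b n m x y -> is_leaf b n y.
Proof. by rewrite /case_c /step_ok => /andP[/negbTE -> /negbTE ->] /andP[]. Qed.

Lemma execution_steps Delta n s : execution Delta n s ->
  forall k, k < n.-1 ->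
  step_ok Delta.-1 n (take k.+1 s) (nth 0 s k) (nth 0 s k.+1).
Proof.
by move=> /and3P[_ _ /allP steps] k k_lt; apply: steps; rewrite mem_iota.
Qed.

Section Execution.
Variables (b n : nat) (s : seq nat).
Hypotheses (b_gt0 : 0 < b) (n_ge2 : 2 <= n).
Hypotheses (size_s : size s = n) (head_s : nth 0 s 0 = 1).
Hypothesis steps : forall k, k < n.-1 ->
  step_ok b n (take k.+1 s) (nth 0 s k) (nth 0 s k.+1).

Local Notation jump k := (case_c b n (take k.+1 s) (nth 0 s k)).

Lemma execution_uniq : uniq s.
Proof.
suff prefix_uniq k : k <= n -> uniq (take k s) by rewrite -(take_size s) prefix_uniq ?size_s.
elim: k => [|k IH] k_le; first by rewrite take0.
rewrite (take_nth 0) ?size_s // rcons_uniq IH ?andbT; last lia.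
case: k {IH} k_le => [|k] k_le; first by rewrite take0.
by apply: step_fresh (steps _); lia.
Qed.

Lemma descent_before_first_jump k : k < n -> (forall i, i < k -> ~~ jump i) ->
  (forall i, i < k -> is_child b n (nth 0 s i) (nth 0 s i.+1))
  /\ all (fun x => x <= nth 0 s k) (take k.+1 s).
Proof.
elim: k => [|k IH] k_lt no_jump.
  by split => //; rewrite (take_nth 0) ?size_s // take0 /= leqnn.
have [IHchild IHmax] := IH (ltnW k_lt) (fun i i_lt => no_jump i (ltnW i_lt)).
have not_up : ~~ case_a b (take k.+1 s) (nth 0 s k).
  rewrite /case_a; case: (posnP k) => [->|k_gt0]; first by rewrite head_s.
  have := IHchild k.-1; rewrite prednK // => /(_ (ltnSn _)) prev_child.
  rewrite (child_parent b_gt0 prev_child); apply/nandP; right; rewrite negbK.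
  rewrite (take_nth 0) ?size_s; last lia.
  rewrite -{2}(prednK k_gt0) (take_nth 0) ?size_s; last lia.
  by rewrite mem_rcons in_cons mem_rcons in_cons eqxx orbT.
have down : is_child b n (nth 0 s k) (nth 0 s k.+1).
  have := no_jump k (ltnSn k); rewrite /case_c not_up /= negbK => has_child.
  have k_lt' : k < n.-1 by lia.
  by move: (steps k_lt'); rewrite /step_ok (negbTE not_up) has_child => /andP[].
split.
  by move=> i; rewrite ltnS leq_eqVlt => /orP[/eqP -> //|]; apply: IHchild.
rewrite (take_nth 0 (n := k.+1)) ?size_s // all_rcons leqnn /=.
by apply: sub_all IHmax => x /=; have := child_gt b_gt0 down; lia.
Qed.

Lemma first_jump_leaf k : k < n.-1 -> jump k -> (forall i, i < k -> ~~ jump i) ->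
  is_leaf b n (nth 0 s k).
Proof.
move=> k_lt jump_k no_jump.
have k_lt_n : k < n by lia.
have [desc visited_le] := descent_before_first_jump k_lt_n no_jump.
have k_gt0 : 0 < k.
  have root_child : has_unmarked_child b n [:: 1] 1.
    apply/hasP; exists 2; first by rewrite mem_iota; lia.
    by rewrite /is_child muln0 muln1 /=; apply/andP; split => //; lia.
  case: (posnP k) jump_k => // ->.
  by rewrite /case_c (take_nth 0) ?size_s ?take0 ?head_s /= ?root_child //; lia.
have := desc k.-1; rewrite prednK // => /(_ (ltnSn _)) /(child_gt b_gt0) /andP[_ y_range].
apply/and3P; split; [lia | apply/eqP; lia |].
apply/negP => /hasP[y y_in y_child].
move: jump_k; rewrite /case_c => /andP[_ /negP]; apply; apply/hasP; exists y => //.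
rewrite y_child /=; apply/negP => /(allP visited_le).
by have := child_gt b_gt0 y_child; lia.
Qed.

Lemma jump_target_leaf j : j \in jumps b n s -> is_leaf b n (nth 0 s j.+1) && (j < n.-1).
Proof.
rewrite mem_filter mem_iota => /andP[jump_j j_range].
have j_lt : j < n.-1 by lia.
by rewrite j_lt andbT (step_jump_leaf jump_j (steps j_lt)).
Qed.

(* Counting leaves: the jump targets and the first jump vertex are n - p
   pairwise distinct leaves at most. *)
Lemma jumps_bound : size (jumps b n s) + 1 <= n - internal b n.
Proof.
have s_uniq := execution_uniq.
set T := [seq nth 0 s j.+1 | j <- jumps b n s].
have T_uniq : uniq T.
  rewrite map_inj_in_uniq ?filter_uniq ?iota_uniq //.
  move=> i j /jump_target_leaf/andP[_ i_lt] /jump_target_leaf/andP[_ j_lt] /eqP.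
  by rewrite nth_uniq ?size_s //; lia.
have [some_jump|] := boolP (has (fun k => jump k) (iota 0 n.-1)); last first.
  rewrite has_filter negbK => /eqP no_jumps; rewrite /jumps no_jumps /=; have := internal_lt b_gt0 n_ge2; lia.
set k := find (fun k => jump k) (iota 0 n.-1).
have k_lt : k < n.-1 by move: some_jump; rewrite has_find size_iota.
have jump_k : jump k by have := nth_find 0 some_jump; rewrite nth_iota.
have before : forall i, i < k -> ~~ jump i.
  by move=> i i_lt; have := before_find 0 i_lt; rewrite nth_iota ?add0n //; lia.
have all_leaves : {subset nth 0 s k :: T <= iota (internal b n).+1 (n - internal b n)}.
  move=> x; rewrite mem_iota in_cons => /orP[/eqP ->|/mapP[j /jump_target_leaf/andP[leaf _] ->]].
    by have := leaf_gt_internal b_gt0 n_ge2 (first_jump_leaf k_lt jump_k before); lia.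
  by have := leaf_gt_internal b_gt0 n_ge2 leaf; lia.
have first_fresh : nth 0 s k \notin T.
  apply/mapP => -[j j_jump /eqP]; have /andP[_ j_lt] := jump_target_leaf j_jump.
  have k_le : k <= j.
    by rewrite leqNgt; apply/negP => /before; move: j_jump; rewrite mem_filter => /andP[->].
  by rewrite nth_uniq ?size_s //; lia.
have leaves_uniq : uniq (nth 0 s k :: T) by rewrite /= first_fresh T_uniq.
have := uniq_leq_size leaves_uniq all_leaves.
by rewrite /= size_iota size_map; lia.
Qed.

End Execution.

Lemma num_edges_le Delta n s :
  num_edges Delta n s <= n.-1 + size (jumps Delta.-1 n s) + 1.
Proof.
rewrite /num_edges /output_edges; apply: leq_trans (size_undup _) _.
rewrite size_filter; apply: leq_trans (count_size _ _) _.
by rewrite /output_edges_raw !size_cat !size_map size_iota /= addnA.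
Qed.

Local Open Scope ring_scope.

Lemma edge_arith (b n p E : nat) : (2 <= b)%N -> (n <= b * p + 1)%N ->
  (E + p + 1 <= 2 * n)%N ->
  E%:R < (2 - 1 / ((b.+1)%:R - 1)) * n%:R + ((b.+1)%:R - 3) / 2 :> rat.
Proof.
move=> b_ge2 n_le E_le.
have -> : (b.+1)%:R - 1 = b%:R :> rat by rewrite -natr1 addrK.
have b_ge2R : 2 <= b%:R :> rat by rewrite ler_nat.
have b_gt0R : 0 < b%:R :> rat by lra.
move: n_le E_le; rewrite -!(ler_nat rat) !natrD !natrM => n_le E_le.
have n_over_b : 1 / b%:R * n%:R <= p%:R + 1 / 2 :> rat.
  by rewrite div1r ler_pdivrMl //; nra.
have -> : (b.+1)%:R = b%:R + 1 :> rat by rewrite natr1.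
rewrite mulrBl; lra.
Qed.

Theorem mainTheorem3 (Delta n : nat) (s : seq nat) :
  (3 <= Delta)%N -> (3 <= n)%N -> execution Delta n s ->
  (num_edges Delta n s)%:R
    < (2 - 1 / (Delta%:R - 1)) * n%:R + (Delta%:R - 3) / 2 :> rat.
Proof.
move=> Delta_ge3 n_ge3 exec.
have steps := execution_steps exec.
move: exec => /and3P[/eqP size_s /eqP head_s _].
set b := Delta.-1 in steps.
have b_gt0 : (0 < b)%N by rewrite /b; lia.
have n_ge2 : (2 <= n)%N by lia.
have jumps_le := jumps_bound b_gt0 n_ge2 size_s head_s steps.
have covers := internal_covers b_gt0 n_ge2.
have edges_le := num_edges_le Delta n s; rewrite -/b in edges_le.
move: (num_edges Delta n s) edges_le => E edges_le.
have -> : Delta = b.+1 by rewrite /b; lia.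
have b_ge2 : (2 <= b)%N by rewrite /b; lia.
clearbody b; apply: (edge_arith (p := internal b n)); lia.
Qed.
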